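(* Consider $n$ agents in the plane evolving according to the piecewise continuous-time dynamics described in the context, with blind-zone radius $\delta>0$. Suppose that at the beginning $t=k$ (an integer) of a time-interval $[k,k+1)$, the agents are not all confined in a disc of radius $\delta$. Then there is an agent which, with a strictly positive probability bounded below by a constant depending only on $n$ (conditionally on the configuration at time $k$), moves during $[k,k+1)$ a distance bounded away from zero by a constant depending only on $n$ and $\delta$ (not on the configuration).
   Context: Agents $1,\dots,n$ have positions $p_i(t)\in\mathbb{R}^2$. Fix $\delta>0$. For each integer $k\ge 0$ and each agent $i$, let $\chi^{(i)}_k$ be independent random variables, uniformly distributed on $[0,2\pi)$, and set the heading $\theta_i(t)=\chi^{(i)}_k$ for $t\in[k,k+1)$, with unit heading vector $\hat\theta_i(t)=(\cos\theta_i(t),\sin\theta_i(t))^\top$. The motion law is $\dot p_i(t)=\hat\theta_i(t)\,s_i(t)$, where $s_i(t)=0$ if there exists an agent $j$ with $d_{ij}(t)>\delta$ and $\hat\theta_i(t)^\top\big(p_j(t)-p_i(t)\big)\le 0$, and $s_i(t)=1$ otherwise. Here $d_{ij}(t)=\|p_i(t)-p_j(t)\|$. Each time-interval $[k,k+1)$ has length $\Delta t=1$. *)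

From HB Require Import structures.
From mathcomp Require Import all_boot all_order all_algebra.
From mathcomp Require Import all_classical all_reals all_analysis.
Set Implicit Arguments. Unset Strict Implicit. Unset Printing Implicit Defensive.
Import Order.TTheory GRing.Theory Num.Theory.
Import numFieldNormedType.Exports.
Local Open Scope classical_set_scope.
Local Open Scope ring_scope.

Section Model.
Variable R : realType.

Definition pt := (R * R)%type.

Definition dist2 (a b : pt) : R :=
  Num.sqrt ((a.1 - b.1) ^+ 2 + (a.2 - b.2) ^+ 2).

Definition head_dot (th : R) (a b : pt) : R :=
  cos th * (b.1 - a.1) + sin th * (b.2 - a.2).

Definition speed (n : nat) (delta th : R) (p : 'I_n -> pt) (i : 'I_n) : R :=
  if `[< exists j : 'I_n, delta < dist2 (p i) (p j) /\ head_dot th (p i) (p j) <= 0 >]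
  then 0 else 1.

Definition in_disc (n : nat) (delta : R) (x : 'I_n -> pt) : Prop :=
  exists c : pt, forall i, dist2 (x i) c <= delta.

(* p : [0,1] -> configurations is a (Caratheodory) solution on one time-interval
   [k,k+1) (time shifted to [0,1]) of  dp_i/dt = hat(theta_i) s_i(t), starting at x0,
   with the headings theta_i held constant:
   p_i(t) = x0_i + (int_0^t s_i(tau) dtau) hat(theta_i). *)
Definition interval_solution (n : nat) (delta : R) (theta : 'I_n -> R)
    (x0 : 'I_n -> pt) (p : R -> 'I_n -> pt) : Prop :=
  forall i : 'I_n,
    measurable_fun `[(0:R), 1] (fun t => speed delta (theta i) (p t) i) /\
    forall t : R, 0 <= t <= 1 ->
      let sig := \int[lebesgue_measure]_(tau in `[(0:R), t]) speed delta (theta i) (p tau) i in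
      p t i = ((x0 i).1 + sig * cos (theta i), (x0 i).2 + sig * sin (theta i)).

Definition uniform_0_2pi d (T : measurableType d) (P : probability T R)
    (X : T -> R) : Prop :=
  measurable_fun setT X /\
  forall B : set R, measurable B ->
    P (X @^-1` B) =
      (lebesgue_measure (B `&` `[(0%R : R), (2 * pi)%R[) * ((2 * pi)^-1)%:E)%E.

Definition mutually_independent d (T : measurableType d) (P : probability T R)
    (n : nat) (X : 'I_n -> T -> R) : Prop :=
  forall B : 'I_n -> set R, (forall i, measurable (B i)) ->
    P (\bigcap_(i in [set: 'I_n]) (X i @^-1` B i)) = (\prod_(i < n) P (X i @^-1` B i))%E.

End Model.

From HB Require Import structures.
From mathcomp Require Import all_boot all_order all_algebra.
From mathcomp Require Import all_classical all_reals all_analysis.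
From mathcomp Require Import lra ring measurable_realfun.
Import Order.TTheory GRing.Theory Num.Theory.
Import numFieldNormedType.Exports.
Local Open Scope classical_set_scope.
Local Open Scope ring_scope.

(* Let eps = pi / (4 n) and look at the n + 1 directions k (3 eps), 0 <= k <= n.
   For each of them some agent minimises the projection of the configuration on
   it, so by pigeonhole one agent i does so for two directions pa < pb, with
   3 eps <= pb - pa < pi.  All agents then lie in the two half-planes bounded at
   x_i by these directions, hence in the cone of half-angle pi/2 - eps around any
   heading in [pa + eps, pa + 2 eps]: they are ahead of i with margin sin eps.
   Agent i draws such a heading with probability eps / (2 pi).  An agent with all
   others ahead with margin kappa cannot be stopped before time kappa delta / 4,
   since relative positions change by at most twice the elapsed time; so it
   travels at least min 1 (kappa delta / 4). *)

Section Plane.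
Context {R : realType}.
Implicit Types (a b u v w : pt R) (x y s : R).

Definition dotp u v : R := u.1 * v.1 + u.2 * v.2.
Definition crossp u v : R := u.1 * v.2 - u.2 * v.1.
Definition vnorm u : R := Num.sqrt (dotp u u).
Definition dir x : pt R := (cos x, sin x).

Lemma dist2E a b : dist2 a b = vnorm (a - b).
Proof. by []. Qed.

Lemma head_dotE x a b : head_dot x a b = dotp (dir x) (b - a).
Proof. by []. Qed.

Lemma dotpC u v : dotp u v = dotp v u.
Proof. by rewrite /dotp; ring. Qed.

Lemma dotpDr u v w : dotp u (v + w) = dotp u v + dotp u w.
Proof. by rewrite /dotp /=; ring. Qed.

Lemma dotpBr u v w : dotp u (v - w) = dotp u v - dotp u w.
Proof. by rewrite /dotp /=; ring. Qed.

Lemma dotpZr u s v : dotp u (s *: v) = s * dotp u v.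
Proof. by rewrite /dotp /= /GRing.scale /=; ring. Qed.

Lemma dotpp_ge0 u : 0 <= dotp u u.
Proof. by rewrite /dotp addr_ge0 // -expr2 sqr_ge0. Qed.

Lemma vnorm_ge0 u : 0 <= vnorm u.
Proof. exact: sqrtr_ge0. Qed.

Lemma sqr_vnorm u : vnorm u ^+ 2 = dotp u u.
Proof. by rewrite sqr_sqrtr // dotpp_ge0. Qed.

Lemma vnormBC u v : vnorm (u - v) = vnorm (v - u).
Proof. by rewrite /vnorm /dotp /=; congr Num.sqrt; ring. Qed.

Lemma vnormZ s u : vnorm (s *: u) = `|s| * vnorm u.
Proof. by rewrite /vnorm dotpZr dotpC dotpZr mulrA -expr2 sqrtrM ?sqr_ge0 // sqrtr_sqr. Qed.

Lemma dotp_dir x y : dotp (dir x) (dir y) = cos (y - x).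
Proof. by rewrite /dotp /= cosB; ring. Qed.

Lemma crossp_dir x y : crossp (dir x) (dir y) = sin (y - x).
Proof. by rewrite /crossp /= sinB; ring. Qed.

Lemma dotpp_dir x : dotp (dir x) (dir x) = 1.
Proof. by rewrite dotp_dir subrr cos0. Qed.

Lemma vnorm_dir x : vnorm (dir x) = 1.
Proof. by rewrite /vnorm dotpp_dir sqrtr1. Qed.

Lemma sqr_dotp_add_sqr_crossp u v :
  dotp u v ^+ 2 + crossp u v ^+ 2 = dotp u u * dotp v v.
Proof. by rewrite /dotp /crossp; ring. Qed.

Lemma normr_dotp_le u v : `|dotp u v| <= vnorm u * vnorm v.
Proof.
rewrite /vnorm -sqrtrM ?dotpp_ge0 // -sqrtr_sqr ler_sqrt; last first.
  by rewrite mulr_ge0 ?dotpp_ge0.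
by rewrite -sqr_dotp_add_sqr_crossp lerDl sqr_ge0.
Qed.

Lemma vnormD_le u v : vnorm (u + v) <= vnorm u + vnorm v.
Proof.
have uv0 : 0 <= vnorm u + vnorm v by rewrite addr_ge0 ?vnorm_ge0.
rewrite -[leRHS]ger0_norm // -sqrtr_sqr ler_sqrt ?sqr_ge0 //.
rewrite sqrrD !sqr_vnorm dotpDr !(dotpC (u + v)) !dotpDr (dotpC v u).
have := ler_norm (dotp u v); have := normr_dotp_le u v; lra.
Qed.

Lemma oppr_vnorm_le_dotp_dir x v : - vnorm v <= dotp (dir x) v.
Proof.
have := normr_dotp_le (dir x) v; rewrite vnorm_dir mul1r ler_norml.
by case/andP.
Qed.

Lemma crossp_mul_vnorm_le a b v :
  dotp a a = 1 -> dotp b b = 1 -> 0 <= crossp a b ->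
  0 <= dotp a v -> 0 <= dotp b v ->
  crossp a b * vnorm v <= dotp a v + dotp b v.
Proof.
move=> a1 b1 ab0 av0 bv0.
have lagrange : crossp a b ^+ 2 * dotp v v = dotp b b * dotp a v ^+ 2
    + dotp a a * dotp b v ^+ 2 - 2 * dotp a v * dotp b v * dotp a b.
  by rewrite /dotp /crossp; ring.
have ab_ge : -1 <= dotp a b.
  have := normr_dotp_le a b; rewrite /vnorm a1 b1 sqrtr1 mulr1 ler_norml.
  by case/andP.
have avbv0 : 0 <= dotp a v * dotp b v by exact: mulr_ge0.
have lhs0 : 0 <= crossp a b * vnorm v by rewrite mulr_ge0 ?vnorm_ge0.
have rhs0 : 0 <= dotp a v + dotp b v by exact: addr_ge0.
rewrite -(@ler_pXn2r _ 2) ?nnegrE // exprMn sqr_vnorm lagrange a1 b1 !mul1r.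
nra.
Qed.

Lemma sinD_mul_dotp_dir al be x v :
  sin (al + be) * dotp (dir x) v
  = sin al * dotp (dir (x - be)) v + sin be * dotp (dir (x + al)) v.
Proof. by rewrite /dotp /= sinD sinB cosB sinD cosD; ring. Qed.

Lemma sin_le_sin_within (eps : R) x :
  0 <= eps -> eps <= x -> x <= pi - eps -> sin eps <= sin x.
Proof.
move=> eps0 epsx xpi.
have pi0 : 0 < pi := pi_gt0 R.
have ler_sin y z : 0 <= y -> y <= z -> z <= pi / 2 -> sin y <= sin z.
  move=> y0 yz zpi; rewrite le_eqVlt in yz; case/orP: yz => [/eqP -> //|yz].
  by apply/ltW; rewrite ltr_sin // in_itv /=; apply/andP; split; lra.
have [xpi2|xpi2] := lerP x (pi / 2); first by apply: ler_sin; lra.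
have -> : sin x = sin (pi - x) by rewrite sinB sinpi cospi; ring.
by apply: ler_sin; lra.
Qed.

Lemma sin_mul_vnorm_le_dotp_dir (eps al be : R) x v :
  0 < eps -> eps <= al -> eps <= be -> al + be < pi ->
  0 <= dotp (dir (x - be)) v -> 0 <= dotp (dir (x + al)) v ->
  sin eps * vnorm v <= dotp (dir x) v.
Proof.
move=> eps0 epsal epsbe albe a0 b0.
have sin_al : sin eps <= sin al by apply: sin_le_sin_within; lra.
have sin_be : sin eps <= sin be by apply: sin_le_sin_within; lra.
have sin_eps0 : 0 <= sin eps by apply: sin_ge0_pi; apply/andP; split; lra.
have sin_albe0 : 0 < sin (al + be) by apply: sin_gt0_pi; apply/andP; split; lra.
have cross : crossp (dir (x - be)) (dir (x + al)) = sin (al + be).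
  by rewrite crossp_dir; congr sin; ring.
have := crossp_mul_vnorm_le (dir (x - be)) (dir (x + al)) v (dotpp_dir _) (dotpp_dir _).
rewrite cross => /(_ (ltW sin_albe0) a0 b0) le_sum.
rewrite -(ler_pM2l sin_albe0) sinD_mul_dotp_dir mulrCA.
apply: le_trans (ler_wpM2l sin_eps0 le_sum) _.
nra.
Qed.

Definition ahead {n} (kappa : R) x (c : 'I_n -> pt R) (i : 'I_n) : Prop :=
  forall j, kappa * vnorm (c j - c i) <= dotp (dir x) (c j - c i).

Lemma ahead_of_extreme {n} (c : 'I_n -> pt R) i (eps pa pb : R) x :
  0 < eps -> pa + eps <= x -> x + eps <= pb -> pb - pa < pi ->
  (forall j, dotp (dir pa) (c i) <= dotp (dir pa) (c j)) ->
  (forall j, dotp (dir pb) (c i) <= dotp (dir pb) (c j)) ->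
  ahead (sin eps) x c i.
Proof.
move=> eps0 pa_x x_pb pb_pa ext_a ext_b j.
apply: (@sin_mul_vnorm_le_dotp_dir eps (pb - x) (x - pa)); try lra.
- by rewrite opprB addrC subrK dotpBr subr_ge0.
- by rewrite addrC subrK dotpBr subr_ge0.
Qed.

Lemma exists_common_argmin {m} (f : 'I_m.+2 -> 'I_m.+1 -> R) :
  exists i (a b : 'I_m.+2),
    [/\ (a < b)%N, forall j, f a i <= f a j & forall j, f b i <= f b j].
Proof.
pose g k := [arg min_(i < ord0) f k i]%O.
have gP k j : f k (g k) <= f k j by rewrite /g; case: arg_minP => // i _ ->.
have : ~~ injectiveb g.
  by apply/injectiveP => /leq_card; rewrite !card_ord ltnn.
case/injectivePn => a [b] ab gab.
wlog lt_ab : a b ab gab / (a < b)%N.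
  move=> sym; case: (ltngtP a b) => [|ba|/val_inj eq_ab]; first exact: sym.
    by apply: (sym b a) => //; rewrite eq_sym.
  by rewrite eq_ab eqxx in ab.
exists (g a), a, b; split => // j; rewrite gab; exact: gP.
Qed.

Lemma exists_ahead_window {m} (c : 'I_m.+1 -> pt R) (eps : R) :
  0 < eps -> 3 * m.+1%:R * eps < pi ->
  exists i (lo : R), [/\ 0 <= lo, lo + eps < 2 * pi &
    forall x, lo <= x <= lo + eps -> ahead (sin eps) x c i].
Proof.
move=> eps0 small.
pose ph (k : 'I_m.+2) := k%:R * (3 * eps).
have [i [a [b [lt_ab ext_a ext_b]]]] :=
  exists_common_argmin (fun k j => dotp (dir (ph k)) (c j)).
have a0 : 0 <= (a%:R : R) by [].
have ab : (a%:R : R) + 1 <= b%:R by rewrite natr1 ler_nat.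
have bm : (b%:R : R) <= m.+1%:R by rewrite ler_nat -ltnS.
have pi0 : 0 < pi := pi_gt0 R.
exists i, (ph a + eps); split; rewrite /ph; try nra.
move=> x /andP[lo_x x_hi]; apply: ahead_of_extreme ext_a ext_b => //; rewrite /ph; nra.
Qed.

End Plane.

Section UnitIntervalIntegral.
Context {R : realType}.
Variable f : R -> R.
Hypotheses (mf : measurable_fun `[0, 1 : R] f) (f01 : forall x, 0 <= f x <= 1).
Local Notation mu := (@lebesgue_measure R).

Let mu_itv0 {t : R} : 0 <= t -> mu `[0, t] = t%:E.
Proof.
rewrite le_eqVlt => /predU1P[<- | t0]; last first.
  by rewrite lebesgue_measure_itv /= lte_fin t0 sube0.
by rewrite set_itv1 lebesgue_measure_set1.
Qed.

Let measurable_fun_itv {t : R} : t <= 1 -> measurable_fun `[0, t] f.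
Proof. by move=> t1; apply: measurable_funS mf => //; apply: subset_itvl. Qed.

Let integral_itv_le {t : R} : 0 <= t <= 1 ->
  (\int[mu]_(x in `[0%R, t]) (f x)%:E <= t%:E)%E.
Proof.
move=> /andP[t0 t1].
apply: (@le_trans _ _ (integral mu `[0%R, t] (cst 1%:E))).
  apply: ge0_le_integral => //.
  - by move=> x _; rewrite lee_fin; case/andP: (f01 x).
  - by apply/measurable_EFinP; exact: measurable_fun_itv.
  - by move=> x _; rewrite lee_fin; case/andP: (f01 x).
by rewrite integral_cst // mul1e -(mu_itv0 t0).
Qed.

Let integral_itv_ge0 (t : R) : (0 <= \int[mu]_(x in `[0%R, t]) (f x)%:E)%E.
Proof. by apply: integral_ge0 => x _; rewrite lee_fin; case/andP: (f01 x). Qed.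

Let integral_itv_fin (t : R) : 0 <= t <= 1 ->
  (\int[mu]_(x in `[0%R, t]) (f x)%:E)%E \is a fin_num.
Proof.
move=> t01; rewrite ge0_fin_numE //.
exact: le_lt_trans (integral_itv_le t01) (ltry _).
Qed.

Lemma Rintegral_itv_ge0_le (t : R) : 0 <= t <= 1 ->
  0 <= \int[mu]_(x in `[0, t]) f x <= t.
Proof.
move=> t01; rewrite /Rintegral fine_ge0 //=.
by rewrite -lee_fin fineK ?integral_itv_fin ?integral_itv_le.
Qed.

Lemma Rintegral_ge_of_eq1 (s : R) : 0 <= s <= 1 ->
  (forall x, 0 <= x <= s -> f x = 1) -> s <= \int[mu]_(x in `[0, 1]) f x.
Proof.
move=> /andP[s0 s1] f1.
rewrite /Rintegral -lee_fin fineK ?integral_itv_fin ?lexx ?ler01 //.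
apply: (@le_trans _ _ (\int[mu]_(x in `[0%R, s]) (f x)%:E)%E); last first.
  apply: ge0_subset_integral => //.
  - by apply/measurable_EFinP; exact: mf.
  - by move=> x _; rewrite lee_fin; case/andP: (f01 x).
  - by apply: subset_itvl; rewrite bnd_simp.
rewrite (eq_integral (cst 1%:E)); first by rewrite integral_cst // mul1e -(mu_itv0 s0).
by move=> x; rewrite inE /= in_itv /= => /f1 ->.
Qed.

End UnitIntervalIntegral.

Section Dynamics.
Context {R : realType} {n : nat}.
Variables (delta : R) (theta : 'I_n -> R).

Lemma speed_ge0_le1 x (q : 'I_n -> pt R) i : 0 <= speed delta x q i <= 1.
Proof. by rewrite /speed; case: asboolP => _; rewrite ?lexx ?ler01. Qed.

Lemma speed_eq1 x (q : 'I_n -> pt R) i :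
  (forall j, delta < dist2 (q i) (q j) -> 0 < head_dot x (q i) (q j)) ->
  speed delta x q i = 1.
Proof.
move=> unblocked; rewrite /speed; case: asboolP => // -[j [far blocked]].
by have := unblocked j far; rewrite ltNge blocked.
Qed.

Lemma ahead_speed_eq1 (kappa tau : R) (c q : 'I_n -> pt R) (s : 'I_n -> R) i :
  0 < kappa <= 1 -> tau <= kappa * delta / 4 -> (forall j, 0 <= s j <= tau) ->
  (forall j, q j = c j + s j *: dir (theta j)) -> ahead kappa (theta i) c i ->
  speed delta (theta i) q i = 1.
Proof.
move=> /andP[k0 k1] tau_le s_bnd qE ahead_i; apply: speed_eq1 => j.
set D := vnorm (c j - c i).
have /andP[si0 si_le] := s_bnd i; have /andP[sj0 sj_le] := s_bnd j.
have qji : q j - q i = (c j - c i) + (s j *: dir (theta j) - s i *: dir (theta i)).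
  by rewrite !qE opprD addrACA.
have dist_le : dist2 (q i) (q j) <= D + (s j + s i).
  rewrite dist2E vnormBC qji; apply: le_trans (vnormD_le _ _) _; rewrite lerD2l.
  apply: le_trans (vnormD_le _ _) _.
  by rewrite -scaleNr !vnormZ !vnorm_dir !mulr1 normrN !ger0_norm.
have head_ge : kappa * D - (s j + s i) <= head_dot (theta i) (q i) (q j).
  rewrite head_dotE qji dotpDr [dotp _ (_ *: _ - _)]dotpBr !dotpZr dotpp_dir.
  have := oppr_vnorm_le_dotp_dir (theta i) (dir (theta j)); rewrite vnorm_dir.
  have := ahead_i j; rewrite -/D; nra.
move=> far.
have : 0 < kappa * (D - (delta - (s j + s i))) by apply: mulr_gt0; lra.
have : kappa * (s j + s i) <= s j + s i by rewrite ler_piMl ?addr_ge0.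
lra.
Qed.

Definition travelled (p : R -> 'I_n -> pt R) i t : R :=
  \int[lebesgue_measure]_(tau in `[0, t]) speed delta (theta i) (p tau) i.

Variables (x0 : 'I_n -> pt R) (p : R -> 'I_n -> pt R).
Hypothesis sol : interval_solution delta theta x0 p.

Lemma interval_solutionE i t : 0 <= t <= 1 ->
  p t i = x0 i + travelled p i t *: dir (theta i).
Proof. by move=> t01; have [_ ->] := sol i. Qed.

Lemma travelled_ge0_le i t : 0 <= t <= 1 -> 0 <= travelled p i t <= t.
Proof.
have [mspeed _] := sol i.
by apply: Rintegral_itv_ge0_le => // tau; exact: speed_ge0_le1.
Qed.

Lemma dist_travelled i : dist2 (p 1 i) (x0 i) = travelled p i 1.
Proof.
have t01 : 0 <= (1 : R) <= 1 by rewrite ler01 /=.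
rewrite dist2E interval_solutionE // addrC addKr vnormZ vnorm_dir mulr1.
by rewrite ger0_norm //; case/andP: (travelled_ge0_le i 1 t01).
Qed.

Lemma ahead_dist_ge (kappa : R) i : 0 < kappa <= 1 -> 0 < delta ->
  ahead kappa (theta i) x0 i -> Num.min 1 (kappa * delta / 4) <= dist2 (p 1 i) (x0 i).
Proof.
move=> /andP[k0 k1] delta0 ahead_i; rewrite dist_travelled.
set tau0 := Num.min 1 (kappa * delta / 4).
have tau0_gt0 : 0 < tau0 by rewrite lt_min ltr01 /= divr_gt0 ?mulr_gt0.
have [mspeed _] := sol i.
apply: Rintegral_ge_of_eq1 => //.
- by move=> tau; exact: speed_ge0_le1.
- by rewrite ltW //= ge_min lexx.
move=> tau /andP[tau_ge0 tau_le].
have tau01 : 0 <= tau <= 1 by rewrite tau_ge0 /= (le_trans tau_le) // ge_min lexx.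
apply: (@ahead_speed_eq1 kappa tau x0 _ (fun j => travelled p j tau)) => //.
- by rewrite k0.
- by apply: le_trans tau_le _; rewrite ge_min lexx orbT.
- move=> j; have /andP[-> ->] := travelled_ge0_le j tau tau01; exact: andbT.
- by move=> j; exact: interval_solutionE.
Qed.

End Dynamics.

Section UniformHeading.
Context {R : realType} {d : measure_display} {T : measurableType d}.
Context {P : probability T R} {X : T -> R}.
Hypothesis X_unif : uniform_0_2pi P X.

Lemma measurable_preimage_uniform (B : set R) :
  measurable B -> measurable (X @^-1` B).
Proof. by move=> mB; have [mX _] := X_unif; rewrite -[_ @^-1` _]setTI; exact: mX. Qed.

Lemma uniform_0_2pi_itv (a b : R) : 0 <= a -> a <= b -> b < 2 * pi ->
  P (X @^-1` `[a, b]) = ((b - a) / (2 * pi))%:E.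
Proof.
move=> a0 ab b2pi; have [_ ->] := X_unif; last exact: measurable_itv.
rewrite setIidl; last first.
  by move=> x /=; rewrite !in_itv /= => /andP[ax xb]; rewrite (le_trans a0) ?(le_lt_trans xb).
rewrite lebesgue_measure_itv /= lte_fin; case: ltP => [_|ba].
  by rewrite -EFinD -EFinM.
have -> : b = a by apply: le_anti; rewrite ab ba.
by rewrite subrr mul0r mul0e.
Qed.

End UniformHeading.

Theorem lemma2 (R : realType) (n : nat) :
  exists pmin : R, 0 < pmin /\
  forall delta : R, 0 < delta ->
  exists dmin : R, 0 < dmin /\
  forall (d : measure_display) (T : measurableType d) (P : probability T R)
         (chi : 'I_n -> T -> R),
    (forall i, uniform_0_2pi P (chi i)) ->
    mutually_independent P chi ->
  forall x0 : 'I_n -> pt R,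
    ~ in_disc delta x0 ->
    exists i : 'I_n, exists A : set T,
      [/\ measurable A, (pmin%:E <= P A)%E &
        forall w, A w ->
        forall p : R -> 'I_n -> pt R,
          interval_solution delta (fun j => chi j w) x0 p ->
          dmin <= dist2 (p 1 i) (x0 i)].
Proof.
case: n => [|m].
  exists 1; split => // delta _; exists 1; split => // d T P chi _ _ x0 x0_spread.
  by exfalso; apply: x0_spread; exists 0 => -[].
have N1 : 1 <= m.+1%:R :> R by rewrite ler1n.
have pi0 : 0 < pi := pi_gt0 R.
have [eps eps0 eps_pi] : exists2 eps : R, 0 < eps & 4 * m.+1%:R * eps = pi.
  exists (pi / (4 * m.+1%:R)); first by rewrite divr_gt0 ?mulr_gt0 ?ltr0n.
  by rewrite mulrC divfK // mulf_neq0 ?pnatr_eq0.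
have sin_eps : 0 < sin eps <= 1 by rewrite sin_le1 sin_gt0_pi // eps0 /=; nra.
exists (eps / (2 * pi)); split; first by rewrite divr_gt0 ?mulr_gt0.
move=> delta delta0; exists (Num.min 1 (sin eps * delta / 4)); split.
  by rewrite lt_min ltr01 /= divr_gt0 ?mulr_gt0 //; case/andP: sin_eps.
(* Only the heading of the chosen agent matters. *)
move=> d T P chi chi_unif _ x0 _.
have [|i [lo [lo0 hi_2pi window]]] := exists_ahead_window x0 eps eps0; first nra.
exists i, (chi i @^-1` `[lo, lo + eps]); split.
- by apply: (measurable_preimage_uniform (chi_unif i)); exact: measurable_itv.
- rewrite (uniform_0_2pi_itv (chi_unif i)) // ?lerDl ?(ltW eps0) //.
  by rewrite lee_fin addrAC subrr add0r.
- move=> w /= chi_w p sol.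
  by apply: ahead_dist_ge; [exact: sol | exact: sin_eps | exact: delta0 | exact: window].
Qed.
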